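(* Let $N\geq 4$ and $G=\mathrm{GL}_2(\mathbb{Z}/N\mathbb{Z})$. For every $\gamma\in\mathrm{SL}_2(\mathbb{Z})$ with reduction $\bar\gamma\in\mathrm{SL}_2(\mathbb{Z}/N\mathbb{Z})$, every $P\in\mathbb{Z}[X,Y]_1$ and all $\alpha,\beta\in\mathcal{H}\cup\mathbb{P}^1(\mathbb{Q})$, we have \[ \bar\gamma_*\big(P\{\alpha,\beta\}\big)=(\gamma P)\{\gamma\alpha,\gamma\beta\} \] as $2$-chains on $E(N)(\mathbb{C})$.
   Context: $\mathcal{H}$ is the upper half-plane. $E(N)(\mathbb{C})=(\mathbb{Z}^2\rtimes\mathrm{SL}_2(\mathbb{Z}))\backslash(\mathcal{H}\times\mathbb{C}\times G)$, where $(m,n)^T\in\mathbb{Z}^2$ acts by $(\tau,z,h)\mapsto(\tau,z+m-n\tau,h)$ and $\begin{pmatrix}a&b\\c&d\end{pmatrix}\in\mathrm{SL}_2(\mathbb{Z})$ acts by $(\tau,z,h)\mapsto\big(\frac{a\tau+b}{c\tau+d},\frac{z}{c\tau+d},\bar\gamma h\big)$ (left multiplication on $G$ by the reduction). An element $g\in G$ acts on $E(N)(\mathbb{C})$ by $g\cdot[\tau,z,h]=[\tau,z,hg^T]$; $g_*$ denotes push-forward of chains. $\mathbb{Z}[X,Y]_1$ is the group of homogeneous degree-$1$ integer polynomials, with left $\mathrm{SL}_2(\mathbb{Z})$-action $\begin{pmatrix}a&b\\c&d\end{pmatrix}P(X,Y)=P(dX-bY,-cX+aY)$; $\mathrm{SL}_2(\mathbb{Z})$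 acts on $\mathcal{H}\cup\mathbb{P}^1(\mathbb{Q})$ by Möbius transformations. Let $\sigma=\begin{pmatrix}0&-1\\1&0\end{pmatrix}$. For $P=mX+nY$, the Shokurov cycle is $P\{\alpha,\beta\}=\{[\tau,t(m\tau+n),\sigma] : \tau\in\{\alpha,\beta\},\ t\in[0,1]\}$, where $\{\alpha,\beta\}$ is the hyperbolic geodesic from $\alpha$ to $\beta$. *)

From mathcomp Require Import all_boot all_order all_algebra complex.
From mathcomp Require Import Rstruct.
Set Implicit Arguments. Unset Strict Implicit. Unset Printing Implicit Defensive.
Import Order.TTheory GRing.Theory Num.Theory.
Local Open Scope ring_scope.

Notation Rr := Rdefinitions.R.
Notation C := (Rr[i]).
Definition toC (x : Rr) : C := real_complex Rr x.

Definition isSL2Z (g : 'M[int]_2) : Prop := \det g = 1.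

Definition ea (g : 'M[int]_2) : int := g 0 0.
Definition eb (g : 'M[int]_2) : int := g 0 1.
Definition ec (g : 'M[int]_2) : int := g 1 0.
Definition ed (g : 'M[int]_2) : int := g 1 1.

(* reduction \bar gamma in M_2(Z/NZ) (here N >= 4, so 'Z_N = Z/NZ) *)
Definition redN (N : nat) (g : 'M[int]_2) : 'M['Z_N]_2 :=
  map_mx (fun x : int => x%:~R) g.

Definition sigmaZ : 'M[int]_2 :=
  \matrix_(i < 2, j < 2)
    (if (i == 0) && (j == 1) then -1 else if (i == 1) && (j == 0) then 1 else 0).

Definition mob (g : 'M[int]_2) (tau : C) : C :=
  ((ea g)%:~R * tau + (eb g)%:~R) / ((ec g)%:~R * tau + (ed g)%:~R).

(* E(N)(C) as the set of orbits of (Z^2 x| SL_2(Z)) on H x C x G       *)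

(* representatives (tau, z, h); G = GL_2(Z/NZ) is realised inside 2x2
   matrices over 'Z_N; all points actually used have tau in H and h in G *)
Definition Rep (N : nat) := (C * C * 'M['Z_N]_2)%type.

Definition actZ2 N (m n : int) (x : Rep N) : Rep N :=
  let: (tau, z, h) := x in (tau, z + m%:~R - n%:~R * tau, h).

Definition actSL N (g : 'M[int]_2) (x : Rep N) : Rep N :=
  let: (tau, z, h) := x in
  (mob g tau, z / ((ec g)%:~R * tau + (ed g)%:~R), redN N g *m h).

Definition same_orbit N (x y : Rep N) : Prop :=
  exists (g : 'M[int]_2) (m n : int), isSL2Z g /\ y = actSL g (actZ2 m n x).

(* a point of E(N)(C) is an orbit, i.e. a subset of representatives *)
Definition EN (N : nat) := Rep N -> Prop.

Definition pt N (tau z : C) (h : 'M['Z_N]_2) : EN N :=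
  fun y => same_orbit (tau, z, h) y.

Definition gactE N (g : 'M['Z_N]_2) (S : EN N) : EN N :=
  fun y => exists tau z h, S (tau, z, h) /\ y = (tau, z, h *m g^T).

Inductive HP1 := Hpt of C | Cusp of rat | Infty.

Definition validHP1 (a : HP1) : Prop :=
  match a with Hpt tau => 0 < complex.Im tau | _ => True end.

Definition mobHP1 (g : 'M[int]_2) (a : HP1) : HP1 :=
  match a with
  | Hpt tau => Hpt (mob g tau)
  | Cusp r =>
      let den := (ec g)%:~R * r + (ed g)%:~R in
      if den == 0 then Infty else Cusp (((ea g)%:~R * r + (eb g)%:~R) / den)
  | Infty => if ec g == 0 then Infty else Cusp ((ea g)%:~R / (ec g)%:~R)
  end.

Definition finpt (a : HP1) : option C :=
  match a with
  | Hpt tau => Some tau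
  | Cusp r => Some (toC (ratr r))
  | Infty => None
  end.

Definition betw (x y z : Rr) : Prop := Num.min x y <= z <= Num.max x y.

(* geod a b tau : tau in H lies on the hyperbolic geodesic {a, b}
   (closed at endpoints lying in H; cusps are not points of H).
   Geodesics are vertical half-lines or semicircles centred on R. *)
Definition geod (a b : HP1) (tau : C) : Prop :=
  0 < complex.Im tau /\
  match finpt a, finpt b with
  | Some u, Some v =>
      if u == v then tau = u
      else if complex.Re u == complex.Re v then
        complex.Re tau = complex.Re u /\ betw (complex.Im u) (complex.Im v) (complex.Im tau)
      else exists c : Rr,
        `|u - toC c| = `|v - toC c| /\ `|tau - toC c| = `|u - toC c| /\
        betw (complex.Re u) (complex.Re v) (complex.Re tau)
  | None, Some v | Some v, None =>
      complex.Re tau = complex.Re v /\ complex.Im v <= complex.Im tau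
  | None, None => False
  end.

(* orientation of {a,b}: tau1 comes (weakly) before tau2 when going from a to b *)
Definition geod_before (a b : HP1) (tau1 tau2 : C) : Prop :=
  geod a b tau1 /\ geod a b tau2 /\ geod a (Hpt tau2) tau1.

(* Z[X,Y]_1 : P = m X + n Y  is stored as the pair (m, n) *)
Definition poly1 := (int * int)%type.

(* gamma P (X,Y) = P(dX - bY, -cX + aY) = (m d - n c) X + (n a - m b) Y *)
Definition actPoly (g : 'M[int]_2) (P : poly1) : poly1 :=
  let: (m, n) := P in (m * ed g - n * ec g, n * ea g - m * eb g).

(* an oriented parametrised 2-cell: the domain is {a,b} x [0,1],
   oriented by the orientation of {a,b} and of [0,1] *)
Record cell2 (N : nat) := Cell2 {
  cell_a : HP1; cell_b : HP1; cell_map : C -> Rr -> EN N }.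

Definition shokurov N (P : poly1) (a b : HP1) : cell2 N :=
  Cell2 a b (fun tau (t : Rr) =>
    pt tau (toC t * ((P.1)%:~R * tau + (P.2)%:~R)) (redN N sigmaZ)).

Definition pushE N (g : 'M['Z_N]_2) (c : cell2 N) : cell2 N :=
  Cell2 (cell_a c) (cell_b c) (fun tau t => gactE g (cell_map c tau t)).

(* equality as 2-chains: the two cells agree up to an orientation-preserving
   reparametrisation of the geodesic factor (t in [0,1] untouched) *)
Definition chain_eq N (c1 c2 : cell2 N) : Prop :=
  exists phi : C -> C,
    (forall tau, geod (cell_a c1) (cell_b c1) tau ->
                 geod (cell_a c2) (cell_b c2) (phi tau)) /\
    (forall tau', geod (cell_a c2) (cell_b c2) tau' ->
       exists tau, geod (cell_a c1) (cell_b c1) tau /\ phi tau = tau') /\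
    (forall tau1 tau2, geod (cell_a c1) (cell_b c1) tau1 ->
       geod (cell_a c1) (cell_b c1) tau2 -> phi tau1 = phi tau2 -> tau1 = tau2) /\
    (forall tau1 tau2, geod (cell_a c1) (cell_b c1) tau1 ->
       geod (cell_a c1) (cell_b c1) tau2 ->
       (geod_before (cell_a c1) (cell_b c1) tau1 tau2 <->
        geod_before (cell_a c2) (cell_b c2) (phi tau1) (phi tau2))) /\
    (forall tau (t : Rr), geod (cell_a c1) (cell_b c1) tau -> 0 <= t <= 1 ->
       cell_map c1 tau t = cell_map c2 (phi tau) t).

From mathcomp Require Import all_boot all_order all_algebra complex.
From mathcomp Require Import Rstruct.
From mathcomp Require Import ring lra.
From Stdlib Require Import FunctionalExtensionality PropExtensionality.
Set Implicit Arguments. Unset Strict Implicit. Unset Printing Implicit Defensive.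
Import Order.TTheory GRing.Theory Num.Theory.
Local Open Scope ring_scope.

(* The reparametrisation is tau |-> gamma tau.  On a cell, right multiplication
   by gamma^T sends [tau, z, sigma] to [tau, z, sigma gamma^T], which is the
   point [gamma tau, z / (c tau + d), gamma sigma gamma^T] of the orbit space;
   gamma sigma gamma^T = det(gamma) sigma = sigma, and z / (c tau + d) is
   t (gamma P)(gamma tau) when z = t P(tau).

   For homogeneous coordinates U of a
   point of H u P^1(Q) put q_U(tau) = (U1 - tau U2)(conj U1 - tau conj U2).
   Then tau lies on {alpha, beta} iff q_alpha(tau) * conj q_beta(tau) is a
   non-positive real.  Since q_(gamma U)(gamma tau) = q_U(tau) / (c tau + d)^2
   and rescaling U by lambda multiplies q_U by |lambda|^2, this quantity only
   changes by a positive factor under gamma.  Orientation is expressed through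
   geodesics too, so it is preserved for the same reason. *)

(** * Integer 2 x 2 matrices *)

Lemma ord2P (i : 'I_2) : i = 0 \/ i = 1.
Proof. by case: i => [[|[|//]] ?]; [left | right]; apply/val_inj. Qed.

Lemma det_mx2 (R : comNzRingType) (A : 'M[R]_2) :
  \det A = A 0 0 * A 1 1 - A 0 1 * A 1 0.
Proof.
rewrite (expand_det_row _ 0) !big_ord_recl big_ord0 addr0 /cofactor !det_mx11 !mxE.
rewrite /= expr0 expr1 mul1r mulN1r mulrN.
by congr (A _ _ * A _ _ - A _ _ * A _ _); apply/val_inj.
Qed.

Lemma mulmx2E (R : pzSemiRingType) (A B : 'M[R]_2) i j :
  (A *m B) i j = A i 0 * B 0 j + A i 1 * B 1 j.
Proof.
by rewrite mxE !big_ord_recl big_ord0 addr0; congr (A _ _ * B _ _ + A _ _ * B _ _); apply/val_inj.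
Qed.

Lemma mx2P (R : Type) (A B : 'M[R]_2) :
  A 0 0 = B 0 0 -> A 0 1 = B 0 1 -> A 1 0 = B 1 0 -> A 1 1 = B 1 1 -> A = B.
Proof.
move=> e00 e01 e10 e11; apply/matrixP => i j.
by case: (ord2P i) => ->; case: (ord2P j) => ->.
Qed.

Lemma isSL2ZE (g : 'M[int]_2) : isSL2Z g <-> ea g * ed g - eb g * ec g = 1.
Proof. by rewrite /isSL2Z det_mx2. Qed.

Lemma isSL2Z_mul (k g : 'M[int]_2) : isSL2Z k -> isSL2Z g -> isSL2Z (k *m g).
Proof. by rewrite /isSL2Z det_mulmx => -> ->; rewrite mulr1. Qed.

Lemma isSL2Z_adj (g : 'M[int]_2) : isSL2Z g -> isSL2Z (\adj g).
Proof.
move=> hg; have := congr1 determinant (mul_adj_mx g).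
by rewrite det_mulmx hg mulr1 det_scalar expr1n.
Qed.

Lemma mul_adj_SL2Z (g : 'M[int]_2) : isSL2Z g -> \adj g *m g = 1.
Proof. by rewrite mul_adj_mx => ->. Qed.

Lemma mul_SL2Z_adj (g : 'M[int]_2) : isSL2Z g -> g *m \adj g = 1.
Proof. by rewrite mul_mx_adj => ->. Qed.

Section Entries.
Variable k g : 'M[int]_2.

Lemma eaM : ea (k *m g) = ea k * ea g + eb k * ec g. Proof. exact: mulmx2E. Qed.
Lemma ebM : eb (k *m g) = ea k * eb g + eb k * ed g. Proof. exact: mulmx2E. Qed.
Lemma ecM : ec (k *m g) = ec k * ea g + ed k * ec g. Proof. exact: mulmx2E. Qed.
Lemma edM : ed (k *m g) = ec k * eb g + ed k * ed g. Proof. exact: mulmx2E. Qed.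

End Entries.

Lemma ea1 : ea 1 = 1. Proof. by rewrite /ea mxE. Qed.
Lemma eb1 : eb 1 = 0. Proof. by rewrite /eb mxE. Qed.
Lemma ec1 : ec 1 = 0. Proof. by rewrite /ec mxE. Qed.
Lemma ed1 : ed 1 = 1. Proof. by rewrite /ed mxE. Qed.

(** * The Moebius action *)

Lemma intr_complex (z : int) : (z%:~R : C) = ((z%:~R : Rr) +i* 0)%C.
Proof. by rewrite -[RHS]/(toC _) /toC rmorph_int. Qed.

Lemma SL2Z_det_intr (F : comPzRingType) g : isSL2Z g ->
  (ea g)%:~R * (ed g)%:~R - (eb g)%:~R * (ec g)%:~R = 1 :> F.
Proof. by move/isSL2ZE => hdet; rewrite -!intrM -intrB hdet. Qed.

Definition jfactor (g : 'M[int]_2) (t : C) : C := (ec g)%:~R * t + (ed g)%:~R.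

Lemma Im_jfactor g t : complex.Im (jfactor g t) = (ec g)%:~R * complex.Im t.
Proof. by case: t => x y; rewrite /jfactor !intr_complex /=; ring. Qed.

Lemma jfactor_neq0 g t : isSL2Z g -> 0 < complex.Im t -> jfactor g t != 0.
Proof.
move=> /isSL2ZE hg hy; apply/eqP => h0.
have /eqP : complex.Im (jfactor g t) = 0 by rewrite h0.
rewrite Im_jfactor mulf_eq0 (gt_eqF hy) orbF intr_eq0 => /eqP hc.
move: h0 hg; rewrite /jfactor hc mul0r add0r mulr0 subr0 => /eqP; rewrite intr_eq0 => /eqP ->.
by rewrite mulr0.
Qed.

Lemma Im_mob g t : isSL2Z g ->
  complex.Im (mob g t) =
  complex.Im t / (complex.Re (jfactor g t) ^+ 2 + complex.Im (jfactor g t) ^+ 2).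
Proof.
move/(SL2Z_det_intr Rr) => hdet.
rewrite /mob -/(jfactor g t) /jfactor !intr_complex; case: t => x y /=.
set a := (ea g)%:~R in hdet *; set b := (eb g)%:~R in hdet *.
set c := (ec g)%:~R in hdet *; set d := (ed g)%:~R in hdet *.
by rewrite -[y / _]mul1r -hdet; ring.
Qed.

Lemma normc2_gt0 (z : C) : z != 0 -> 0 < complex.Re z ^+ 2 + complex.Im z ^+ 2.
Proof.
case: z => x y hz /=; rewrite lt_def addr_ge0 ?sqr_ge0 // andbT paddr_eq0 ?sqr_ge0 //.
by rewrite !sqrf_eq0; apply: contra hz => /andP[/eqP -> /eqP ->].
Qed.

Lemma Im_mob_gt0 g t : isSL2Z g -> 0 < complex.Im t -> 0 < complex.Im (mob g t).
Proof.
by move=> hg hy; rewrite Im_mob // divr_gt0 // normc2_gt0 // jfactor_neq0.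
Qed.

Lemma jfactor_mob k g t : jfactor g t != 0 ->
  jfactor k (mob g t) * jfactor g t = jfactor (k *m g) t.
Proof. by rewrite /mob /jfactor ecM edM !intrD !intrM => hj; field. Qed.

Lemma num_mob k g t : jfactor g t != 0 ->
  ((ea k)%:~R * mob g t + (eb k)%:~R) * jfactor g t =
  (ea (k *m g))%:~R * t + (eb (k *m g))%:~R.
Proof. by rewrite /mob /jfactor eaM ebM !intrD !intrM => hj; field. Qed.

Lemma mobM k g t : jfactor g t != 0 -> mob k (mob g t) = mob (k *m g) t.
Proof.
move=> hj; rewrite [RHS]/mob -/(jfactor _ t) -num_mob // -jfactor_mob //.
by rewrite invfM mulrACA divff // mulr1.
Qed.

Lemma mob1 t : mob 1 t = t.
Proof. by rewrite /mob ea1 eb1 ec1 ed1 mul1r addr0 mul0r add0r divr1. Qed.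

Lemma mob_adjK g t : isSL2Z g -> 0 < complex.Im t -> mob (\adj g) (mob g t) = t.
Proof. by move=> hg hy; rewrite mobM ?mul_adj_SL2Z ?mob1 ?jfactor_neq0. Qed.

Lemma mobK_adj g t : isSL2Z g -> 0 < complex.Im t -> mob g (mob (\adj g) t) = t.
Proof.
move=> hg hy; rewrite mobM ?mul_SL2Z_adj ?mob1 //.
exact/jfactor_neq0/hy/isSL2Z_adj.
Qed.

Lemma redN_mul N (k g : 'M[int]_2) : redN N (k *m g) = redN N k *m redN N g.
Proof. exact: map_mxM. Qed.

(** * Points of E(N) and Shokurov cells *)

(* The new translation vector is adj(g) (m, n): the semidirect product law. *)
Lemma actSL_actZ2_actSL N k g m n t z (h : 'M['Z_N]_2) : jfactor g t != 0 ->
  actSL k (actZ2 m n (actSL g (t, z, h))) =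
  actSL (k *m g) (actZ2 (m * ed g - n * eb g) (n * ea g - m * ec g) (t, z, h)).
Proof.
move=> hj; rewrite /= mobM // redN_mul mulmxA; congr (_, _, _).
rewrite -[(ec (k *m g))%:~R * t + _]/(jfactor (k *m g) t).
rewrite -jfactor_mob // [_ * jfactor g t]mulrC invfM [RHS]mulrA.
by congr (_ / _); move: hj; rewrite /mob /jfactor !intrB !intrM => hj; field.
Qed.

Lemma same_orbit_actSL N g t z (h : 'M['Z_N]_2) y : isSL2Z g -> 0 < complex.Im t ->
  same_orbit (actSL g (t, z, h)) y <-> same_orbit (t, z, h) y.
Proof.
move=> hg hy; have hj := jfactor_neq0 hg hy.
split=> [[k [m [n [hk ->]]]]|[k [m [n [hk ->]]]]].
  exists (k *m g), (m * ed g - n * eb g), (n * ea g - m * ec g).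
  by split; [exact: isSL2Z_mul | rewrite actSL_actZ2_actSL].
exists (k *m \adj g), (ea g * m + eb g * n), (ec g * m + ed g * n).
split; first exact/isSL2Z_mul/isSL2Z_adj.
rewrite actSL_actZ2_actSL // -mulmxA mul_adj_SL2Z // mulmx1.
move/isSL2ZE: hg => hdet.
by congr (actSL k (actZ2 _ _ _)); rewrite -[LHS]mulr1 -hdet; ring.
Qed.

Lemma pt_actSL N g t z (h : 'M['Z_N]_2) : isSL2Z g -> 0 < complex.Im t ->
  pt (mob g t) (z / jfactor g t) (redN N g *m h) = pt t z h.
Proof.
move=> hg hy; apply: functional_extensionality => y.
exact/propositional_extensionality/same_orbit_actSL.
Qed.

Lemma gactE_pt N (G : 'M['Z_N]_2) t z h : gactE G (pt t z h) = pt t z (h *m G^T).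
Proof.
apply: functional_extensionality => y; apply: propositional_extensionality.
split=> [[t' [z' [h' [[k [m [n [hk e]]]] ->]]]]|[k [m [n [hk ->]]]]].
  by exists k, m, n; split=> //; move: e => /= [-> -> ->]; rewrite mulmxA.
exists (mob k t), ((z + m%:~R - n%:~R * t) / jfactor k t), (redN N k *m h).
by split; [exists k, m, n | rewrite /= mulmxA].
Qed.

Lemma mul_sigmaZ_tr g : g *m sigmaZ *m g^T = \det g *: sigmaZ.
Proof. by rewrite det_mx2; apply/mx2P; rewrite !mulmx2E !mxE /=; ring. Qed.

Lemma redN_sigmaZ_tr N g : isSL2Z g ->
  redN N g *m redN N sigmaZ *m (redN N g)^T = redN N sigmaZ.
Proof.
by move=> hg; rewrite /redN map_trmx -!map_mxM mul_sigmaZ_tr hg scale1r.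
Qed.

Lemma actPoly_mob g (P : poly1) t : isSL2Z g -> jfactor g t != 0 ->
  (actPoly g P).1%:~R * mob g t + (actPoly g P).2%:~R =
  (P.1%:~R * t + P.2%:~R) / jfactor g t.
Proof.
move/(SL2Z_det_intr C).
case: P => m n; rewrite /mob /jfactor /= !intrB !intrM.
set a := (ea g)%:~R; set b := (eb g)%:~R; set c := (ec g)%:~R; set d := (ed g)%:~R.
set m' : C := m%:~R; set n' : C := n%:~R.
by move=> hdet hj; rewrite -[m' * t + n']mul1r -hdet; field.
Qed.

Lemma gactE_shokurov N g (P : poly1) t (s : Rr) : isSL2Z g -> 0 < complex.Im t ->
  gactE (redN N g) (pt t (toC s * (P.1%:~R * t + P.2%:~R)) (redN N sigmaZ)) =
  pt (mob g t) (toC s * ((actPoly g P).1%:~R * mob g t + (actPoly g P).2%:~R))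
     (redN N sigmaZ).
Proof.
move=> hg hy; rewrite gactE_pt -(pt_actSL _ _ hg hy) mulmxA redN_sigmaZ_tr //.
by rewrite actPoly_mob ?jfactor_neq0 ?mulrA.
Qed.

(** * Geodesics in coordinates *)

Section HalfPlaneArith.
Variable R : realFieldType.
Implicit Types p q x y c : R.

(* Real and imaginary parts of (u - t)(conj u - t) for u = p + iq, t = x + iy. *)
Definition geodq_re p q x y := (p - x) ^+ 2 + q ^+ 2 - y ^+ 2.
Definition geodq_im p x y := 2 * y * (x - p).

Lemma geodq_im_eq0 p x y : 0 < y -> (geodq_im p x y == 0) = (x == p).
Proof. by move=> hy; rewrite !mulf_eq0 pnatr_eq0 (gt_eqF hy) subr_eq0. Qed.

Lemma vertical_ray p q x y : 0 <= q -> 0 < y ->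
  (x = p /\ q <= y) <-> (geodq_im p x y = 0 /\ geodq_re p q x y <= 0).
Proof.
move=> hq hy; rewrite /geodq_re; split=> [[-> hqy]|[/eqP hB hA]].
  by rewrite /geodq_im; split; [ring | nra].
by move: hB hA; rewrite geodq_im_eq0 // => /eqP ->; split=> //; nra.
Qed.

Lemma vertical_segment p q1 q2 x y : 0 <= q1 -> 0 <= q2 -> q1 != q2 -> 0 < y ->
  (x = p /\ (y - q1) * (y - q2) <= 0) <->
  (geodq_im p x y * geodq_re p q2 x y - geodq_re p q1 x y * geodq_im p x y = 0 /\
   geodq_re p q1 x y * geodq_re p q2 x y + geodq_im p x y * geodq_im p x y <= 0).
Proof.
move=> hq1 hq2 hq hy.
have hsum : 0 < (y + q1) * (y + q2) by rewrite mulr_gt0 // ltr_wpDr.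
have on_line : x = p -> geodq_re p q1 x y * geodq_re p q2 x y +
    geodq_im p x y * geodq_im p x y = ((y - q1) * (y - q2)) * ((y + q1) * (y + q2)).
  by move=> ->; rewrite /geodq_re /geodq_im; ring.
split=> [[xp hb]|[hIm hRe]].
  by rewrite on_line // pmulr_lle0 // /geodq_im xp; split=> //; ring.
have xp : x = p.
  have : geodq_im p x y * ((q2 - q1) * (q2 + q1)) = 0.
    by rewrite -hIm /geodq_re; ring.
  move/eqP; rewrite mulf_eq0 geodq_im_eq0 // mulf_eq0 subr_eq0 [q2 == q1]eq_sym.
  rewrite (negPf hq) paddr_eq0 // => /orP[/eqP //|/andP[/eqP e2 /eqP e1]].
  by move: hq; rewrite e1 e2 eqxx.
by split=> //; move: hRe; rewrite on_line // pmulr_lle0.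
Qed.

Lemma semicircle_arc_identities p1 q1 p2 q2 x y c :
  (p1 - c) ^+ 2 + q1 ^+ 2 = (p2 - c) ^+ 2 + q2 ^+ 2 ->
  geodq_im p1 x y * geodq_re p2 q2 x y - geodq_re p1 q1 x y * geodq_im p2 x y =
    2 * y * (p2 - p1) * ((p1 - c) ^+ 2 + q1 ^+ 2 - ((x - c) ^+ 2 + y ^+ 2)) /\
  ((x - c) ^+ 2 + y ^+ 2 = (p1 - c) ^+ 2 + q1 ^+ 2 ->
   geodq_re p1 q1 x y * geodq_re p2 q2 x y + geodq_im p1 x y * geodq_im p2 x y =
    (x - p1) * (x - p2) * (4 * ((x - c) ^+ 2 + y ^+ 2))).
Proof.
move=> hc; have hq2 : q2 ^+ 2 = (p1 - c) ^+ 2 + q1 ^+ 2 - (p2 - c) ^+ 2 by rewrite hc; ring.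
rewrite /geodq_re /geodq_im hq2; split; first ring.
move=> hr; have hq1 : q1 ^+ 2 = (x - c) ^+ 2 + y ^+ 2 - (p1 - c) ^+ 2 by rewrite hr; ring.
by rewrite hq1; ring.
Qed.

Lemma semicircle_arc p1 q1 p2 q2 x y : p1 != p2 -> 0 < y ->
  (exists c, (p1 - c) ^+ 2 + q1 ^+ 2 = (p2 - c) ^+ 2 + q2 ^+ 2 /\
             (x - c) ^+ 2 + y ^+ 2 = (p1 - c) ^+ 2 + q1 ^+ 2 /\
             (x - p1) * (x - p2) <= 0) <->
  (geodq_im p1 x y * geodq_re p2 q2 x y - geodq_re p1 q1 x y * geodq_im p2 x y = 0 /\
   geodq_re p1 q1 x y * geodq_re p2 q2 x y + geodq_im p1 x y * geodq_im p2 x y <= 0).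
Proof.
move=> hp hy; have hp' : p2 - p1 != 0 by rewrite subr_eq0 eq_sym.
have hrad : forall c, 0 < 4 * ((x - c) ^+ 2 + y ^+ 2).
  by move=> c; rewrite mulr_gt0 // ltr_wpDl ?sqr_ge0 ?exprn_gt0.
split=> [[c [hc [hr hb]]]|[hIm hRe]].
  have [-> ->] := semicircle_arc_identities x y hc; last by [].
  by split; [rewrite hr subrr mulr0 | rewrite pmulr_lle0].
(* where the perpendicular bisector of (p1, q1) and (p2, q2) meets the real axis *)
pose c := (p2 ^+ 2 + q2 ^+ 2 - p1 ^+ 2 - q1 ^+ 2) / (2 * (p2 - p1)).
have hc : (p1 - c) ^+ 2 + q1 ^+ 2 = (p2 - c) ^+ 2 + q2 ^+ 2.
  by apply/eqP; rewrite -subr_eq0 /c; apply/eqP; field.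
have [hIm' hRe'] := semicircle_arc_identities x y hc.
have hr : (x - c) ^+ 2 + y ^+ 2 = (p1 - c) ^+ 2 + q1 ^+ 2.
  move: hIm; rewrite hIm' => /eqP; rewrite !mulf_eq0 pnatr_eq0 (gt_eqF hy) (negPf hp') /=.
  by rewrite subr_eq0 eq_sym => /eqP.
by exists c; split=> //; split=> //; move: hRe; rewrite hRe' // pmulr_lle0.
Qed.

End HalfPlaneArith.

Definition hcoord (o : option C) : C * C := if o is Some u then (u, 1) else (1, 0).

(* The binary quadratic form with roots U and conj U, evaluated at (t, 1). *)
Definition geodq (U : C * C) (t : C) : C :=
  (U.1 - t * U.2) * (U.1^*%C - t * U.2^*%C).

(* In the partial order of C, z <= 0 means that z is a non-positive real. *)
Definition geod_test (o1 o2 : option C) (t : C) : bool :=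
  geodq (hcoord o1) t * (geodq (hcoord o2) t)^*%C <= 0.

Lemma geodq_Some u t : geodq (hcoord (Some u)) t = (u - t) * (u^*%C - t).
Proof. by rewrite /geodq conjc1 !mulr1. Qed.

Lemma geodq_None t : geodq (hcoord None) t = 1.
Proof. by rewrite /geodq conjc1 conjc0 !mulr0 !subr0 mulr1. Qed.

Lemma Re_geodq u t : complex.Re ((u - t) * (u^*%C - t)) =
  @geodq_re Rr (complex.Re u) (complex.Im u) (complex.Re t) (complex.Im t).
Proof. by case: u => ? ?; case: t => ? ?; rewrite /geodq_re /=; ring. Qed.

Lemma Im_geodq u t : complex.Im ((u - t) * (u^*%C - t)) =
  @geodq_im Rr (complex.Re u) (complex.Re t) (complex.Im t).
Proof. by case: u => ? ?; case: t => ? ?; rewrite /geodq_im /=; ring. Qed.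

Lemma Re_mulcJ (z w : C) :
  complex.Re (z * w^*%C) = complex.Re z * complex.Re w + complex.Im z * complex.Im w.
Proof. by case: z => ? ?; case: w => ? ? /=; ring. Qed.

Lemma Im_mulcJ (z w : C) :
  complex.Im (z * w^*%C) = complex.Im z * complex.Re w - complex.Re z * complex.Im w.
Proof. by case: z => ? ?; case: w => ? ? /=; ring. Qed.

Lemma lec0E (z : C) : (z <= 0) = (complex.Im z == 0) && (complex.Re z <= 0).
Proof. by rewrite lecE eq_sym. Qed.

Lemma mulcJ_le0 (z : C) : (z * z^*%C <= 0) = (z == 0).
Proof. by rewrite -sqr_normc -normrX normr_le0 sqrf_eq0. Qed.

Lemma mulcJ_gt0 (z : C) : z != 0 -> 0 < z * z^*%C.
Proof. by move=> hz; rewrite -sqr_normc exprn_gt0 // normr_gt0. Qed.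

Lemma betwE (x y z : Rr) : betw x y z <-> (z - x) * (z - y) <= 0.
Proof.
rewrite /betw /Order.min /Order.max; case: (ltP x y) => hxy.
  by split=> [/andP[h1 h2]|h]; [nra | apply/andP; split; nra].
by split=> [/andP[h1 h2]|h]; [nra | apply/andP; split; nra].
Qed.

Lemma normc_subR_eq (u v : C) (c : Rr) : `|u - toC c| = `|v - toC c| <->
  (complex.Re u - c) ^+ 2 + complex.Im u ^+ 2 = (complex.Re v - c) ^+ 2 + complex.Im v ^+ 2.
Proof.
case: u => a b; case: v => a' b'; rewrite !normc_def /= !subr0.
split=> [/complexI/eqP|->] //.
by rewrite eqr_sqrt ?addr_ge0 ?sqr_ge0 // => /eqP.
Qed.

Lemma conjc_le0 (z : C) : (z^*%C <= 0) = (z <= 0).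
Proof. by case: z => x y; rewrite !lec0E /= oppr_eq0. Qed.

Lemma conjcM (z w : C) : (z * w)^*%C = z^*%C * w^*%C.
Proof. exact: rmorphM. Qed.

Lemma geod_testC o1 o2 t : geod_test o1 o2 t = geod_test o2 o1 t.
Proof. by rewrite /geod_test -conjc_le0 conjcM conjcK mulrC. Qed.

Lemma geod_test_point u t : 0 <= complex.Im u -> 0 < complex.Im t ->
  t = u <-> geod_test (Some u) (Some u) t.
Proof.
move=> hu ht; rewrite /geod_test geodq_Some mulcJ_le0 mulf_eq0 !subr_eq0.
split=> [->|/orP[/eqP //|/eqP hconj]]; first by rewrite eqxx.
by move: ht; rewrite -hconj; case: u hu {hconj} => x y /= hu; rewrite oppr_gt0 ltNge hu.
Qed.

Lemma geod_test_ray u t : 0 <= complex.Im u -> 0 < complex.Im t ->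
  (complex.Re t = complex.Re u /\ complex.Im u <= complex.Im t) <->
  geod_test (Some u) None t.
Proof.
move=> hu ht; rewrite /geod_test geodq_Some geodq_None conjc1 mulr1 lec0E.
rewrite Im_geodq Re_geodq vertical_ray //.
by split=> [[-> ->]|/andP[/eqP -> ->]]; rewrite ?eqxx.
Qed.

Lemma geod_test_segment u v t : complex.Re u = complex.Re v -> u != v ->
  0 <= complex.Im u -> 0 <= complex.Im v -> 0 < complex.Im t ->
  (complex.Re t = complex.Re u /\ betw (complex.Im u) (complex.Im v) (complex.Im t)) <->
  geod_test (Some u) (Some v) t.
Proof.
move=> hre huv hu hv ht.
have hq : complex.Im u != complex.Im v.
  by apply: contra huv; case: u v hre {hu hv} => [? ?] [? ?] /= -> /eqP ->.
rewrite /geod_test !geodq_Some lec0E Re_mulcJ Im_mulcJ !Re_geodq !Im_geodq -hre betwE.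
by rewrite vertical_segment //; split=> [[-> ->]|/andP[/eqP -> ->]]; rewrite ?eqxx.
Qed.

Lemma geod_test_arc u v t : complex.Re u != complex.Re v -> 0 < complex.Im t ->
  (exists c : Rr, `|u - toC c| = `|v - toC c| /\ `|t - toC c| = `|u - toC c| /\
                  betw (complex.Re u) (complex.Re v) (complex.Re t)) <->
  geod_test (Some u) (Some v) t.
Proof.
move=> hre ht; rewrite /geod_test !geodq_Some lec0E Re_mulcJ Im_mulcJ !Re_geodq !Im_geodq.
transitivity (exists c : Rr,
  (complex.Re u - c) ^+ 2 + complex.Im u ^+ 2 = (complex.Re v - c) ^+ 2 + complex.Im v ^+ 2 /\
  (complex.Re t - c) ^+ 2 + complex.Im t ^+ 2 = (complex.Re u - c) ^+ 2 + complex.Im u ^+ 2 /\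
  (complex.Re t - complex.Re u) * (complex.Re t - complex.Re v) <= 0).
  by split=> -[c [h1 [h2 h3]]]; exists c; move: h1 h2 h3; rewrite !normc_subR_eq betwE.
by rewrite semicircle_arc //; split=> [[-> ->]|/andP[/eqP -> ->]]; rewrite ?eqxx.
Qed.

Lemma finpt_Im_ge0 a : validHP1 a ->
  if finpt a is Some u then 0 <= complex.Im u else true.
Proof. by case: a => [u /= /ltW|r|] //=. Qed.

Lemma geodE a b t : validHP1 a -> validHP1 b ->
  geod a b t <-> 0 < complex.Im t /\ geod_test (finpt a) (finpt b) t.
Proof.
move=> /finpt_Im_ge0 ha /finpt_Im_ge0 hb; rewrite /geod.
have under_Im_gt0 (P Q : Prop) : (0 < complex.Im t -> (P <-> Q)) ->
    0 < complex.Im t /\ P <-> 0 < complex.Im t /\ Q.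
  by move=> hPQ; split=> -[ht /(hPQ ht) h].
move: (finpt a) (finpt b) ha hb => [u|] [v|] hu hv; apply: under_Im_gt0 => ht.
- case: eqP => [<-|/eqP huv]; first exact: geod_test_point.
  by case: eqP => [hre|/eqP hre]; [exact: geod_test_segment | exact: geod_test_arc].
- exact: geod_test_ray.
- by rewrite geod_testC; exact: geod_test_ray.
- by rewrite /geod_test geodq_None conjc1 mulr1 ler10.
Qed.

(** * Moebius invariance of geodesics *)

Definition hact (g : 'M[int]_2) (U : C * C) : C * C :=
  ((ea g)%:~R * U.1 + (eb g)%:~R * U.2, (ec g)%:~R * U.1 + (ed g)%:~R * U.2).

Lemma conjc_intr (z : int) : (z%:~R : C)^*%C = z%:~R.
Proof. exact: rmorph_int. Qed.

Lemma conjcD (z w : C) : (z + w)^*%C = z^*%C + w^*%C.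
Proof. exact: rmorphD. Qed.

Lemma geodq_scale l U t : geodq (l * U.1, l * U.2) t = l * l^*%C * geodq U t.
Proof. by rewrite /geodq /= !conjcM; ring. Qed.

Lemma hact_sub_mob g t u1 u2 : isSL2Z g -> jfactor g t != 0 ->
  (ea g)%:~R * u1 + (eb g)%:~R * u2 - mob g t * ((ec g)%:~R * u1 + (ed g)%:~R * u2) =
  (u1 - t * u2) / jfactor g t.
Proof.
move/(SL2Z_det_intr C); rewrite /mob /jfactor.
set a := (ea g)%:~R; set b := (eb g)%:~R; set c := (ec g)%:~R; set d := (ed g)%:~R.
by move=> hdet hj; rewrite -[u1 - t * u2]mul1r -hdet; field.
Qed.

Lemma geodq_hact g U t : isSL2Z g -> jfactor g t != 0 ->
  geodq (hact g U) (mob g t) = geodq U t / jfactor g t ^+ 2.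
Proof.
move=> hg hj; rewrite /geodq /= !conjcD !conjcM !conjc_intr !hact_sub_mob //.
by rewrite mulf_div expr2.
Qed.

Definition hproj (V : C * C) : option C := if V.2 == 0 then None else Some (V.1 / V.2).

Lemma hcoord_hproj V : V != (0, 0) ->
  exists2 l : C, l != 0 & hcoord (hproj V) = (l * V.1, l * V.2).
Proof.
case: V => v1 v2; rewrite /hproj /=; case: (eqVneq v2 0) => [-> hV|hv2 _].
  have hv1 : v1 != 0 by apply: contraNneq hV => ->.
  by exists v1^-1; rewrite ?invr_eq0 // mulVf // mulr0.
by exists v2^-1; rewrite ?invr_eq0 // mulVf // mulrC.
Qed.

Lemma hact_adj g U : isSL2Z g ->
  ((ed g)%:~R * (hact g U).1 - (eb g)%:~R * (hact g U).2,
   (ea g)%:~R * (hact g U).2 - (ec g)%:~R * (hact g U).1) = U.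
Proof.
move/(SL2Z_det_intr C); case: U => u1 u2; rewrite /hact /=.
set a := (ea g)%:~R; set b := (eb g)%:~R; set c := (ec g)%:~R; set d := (ed g)%:~R.
by move=> hdet; congr pair; rewrite -[RHS]mul1r -hdet; ring.
Qed.

Lemma hact_neq0 g U : isSL2Z g -> U != (0, 0) -> hact g U != (0, 0).
Proof.
by move=> hg; apply: contraNneq => hU0; rewrite -(hact_adj U hg) hU0 /= !mulr0 subrr.
Qed.

Lemma hcoord_neq0 o : hcoord o != (0, 0).
Proof. by case: o => [u|]; rewrite xpair_eqE oner_eq0 ?andbF. Qed.

Lemma finpt_mobHP1 g a : isSL2Z g -> validHP1 a ->
  finpt (mobHP1 g a) = hproj (hact g (hcoord (finpt a))).
Proof.
move=> hg; case: a => [u hu|r _|_]; rewrite /hproj /= ?mulr1 ?mulr0 ?addr0.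
- by rewrite -/(jfactor g u) (negPf (jfactor_neq0 hg hu)).
- have hs (x y : int) : ratr (x%:~R * r + y%:~R) = x%:~R * ratr r + y%:~R :> C.
    by rewrite rmorphD rmorphM !rmorph_int.
  rewrite /toC fmorph_rat -!hs fmorph_eq0; case: ifP => //= _.
  by rewrite /toC fmorph_rat rmorphM fmorphV.
- rewrite intr_eq0; case: ifP => //= _.
  by rewrite /toC fmorph_rat rmorphM fmorphV !rmorph_int.
Qed.

Lemma hcoord_mob g a : isSL2Z g -> validHP1 a ->
  exists2 l : C, l != 0 &
    hcoord (finpt (mobHP1 g a)) =
    (l * (hact g (hcoord (finpt a))).1, l * (hact g (hcoord (finpt a))).2).
Proof.
by move=> hg ha; rewrite finpt_mobHP1 //; apply/hcoord_hproj/hact_neq0/hcoord_neq0.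
Qed.

Lemma geod_test_mob g a b t : isSL2Z g -> validHP1 a -> validHP1 b -> 0 < complex.Im t ->
  geod_test (finpt (mobHP1 g a)) (finpt (mobHP1 g b)) (mob g t) =
  geod_test (finpt a) (finpt b) t.
Proof.
move=> hg ha hb ht; have hj := jfactor_neq0 hg ht; rewrite /geod_test.
have [la hla ->] := hcoord_mob hg ha; have [lb hlb ->] := hcoord_mob hg hb.
rewrite !geodq_scale !geodq_hact //.
set Qa := geodq _ t; set Qb := geodq _ t; set w := (jfactor g t ^+ 2)^-1.
have hw : w != 0 by rewrite invr_eq0 expf_neq0.
rewrite (_ : _ * _ = la * la^*%C * (lb * lb^*%C) * (w * w^*%C) * (Qa * Qb^*%C)).
  by rewrite pmulr_rle0 // mulr_gt0 ?mulcJ_gt0 // mulr_gt0 ?mulcJ_gt0.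
by rewrite !conjcM conjcK; ring.
Qed.

Lemma validHP1_mob g a : isSL2Z g -> validHP1 a -> validHP1 (mobHP1 g a).
Proof. by move=> hg; case: a => [u /= /(Im_mob_gt0 hg)|r|] //=; case: ifP. Qed.

Lemma geod_mob g a b t : isSL2Z g -> validHP1 a -> validHP1 b -> 0 < complex.Im t ->
  geod a b t <-> geod (mobHP1 g a) (mobHP1 g b) (mob g t).
Proof.
move=> hg ha hb ht.
rewrite (geodE _ (validHP1_mob hg ha) (validHP1_mob hg hb)) geod_test_mob // geodE //.
by split=> -[_ h]; split=> //; exact: Im_mob_gt0.
Qed.

Lemma geod_before_mob g a b t1 t2 : isSL2Z g -> validHP1 a -> validHP1 b ->
  0 < complex.Im t1 -> 0 < complex.Im t2 ->
  geod_before a b t1 t2 <->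
  geod_before (mobHP1 g a) (mobHP1 g b) (mob g t1) (mob g t2).
Proof.
move=> hg ha hb h1 h2; rewrite /geod_before -!geod_mob //.
by rewrite -[Hpt (mob g t2)]/(mobHP1 g (Hpt t2)) -geod_mob.
Qed.

Theorem lemma4p3 (N : nat) (hN : (4 <= N)%N) (g : 'M[int]_2) (hg : isSL2Z g)
  (P : poly1) (a b : HP1) (ha : validHP1 a) (hb : validHP1 b) :
  chain_eq (pushE (redN N g) (shokurov N P a b))
           (shokurov N (actPoly g P) (mobHP1 g a) (mobHP1 g b)).
Proof.
have Im_gt0 a' b' t : geod a' b' t -> 0 < complex.Im t by case.
exists (mob g); split; [|split; [|split; [|split]]] => /=.
- by move=> t ht; rewrite -geod_mob // (Im_gt0 _ _ _ ht).
- move=> t' ht'; have ht := Im_mob_gt0 (isSL2Z_adj hg) (Im_gt0 _ _ _ ht').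
  have hK := mobK_adj hg (Im_gt0 _ _ _ ht').
  by exists (mob (\adj g) t'); split=> //; rewrite (geod_mob hg) // hK.
- by move=> t1 t2 /Im_gt0 h1 /Im_gt0 h2 e; rewrite -(mob_adjK hg h1) e mob_adjK.
- by move=> t1 t2 /Im_gt0 h1 /Im_gt0 h2; exact: geod_before_mob.
- by move=> t s /Im_gt0 ht _; exact: gactE_shokurov.
Qed.
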